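(* There is no continuous real function on $\widetilde{\mathrm{Sp}}(2n)$ which is strictly increasing along every timelike curve and invariant under conjugacy.
   Context: $\omega_0=\sum_j\mathrm{d}x_j\wedge\mathrm{d}y_j$ on $\mathbb{R}^{2n}$, $\mathrm{Sp}(2n)$ its linear symplectic group, $\widetilde{\mathrm{Sp}}(2n)$ its universal cover (a Lie group). $\mathrm{sp}(2n)=\{X:(u,v)\mapsto\omega_0(u,Xv)\text{ symmetric}\}$ and $\mathrm{sp}^+(2n)$ the subset where this form is positive definite. A $C^1$ curve $W$ in $\mathrm{Sp}(2n)$ is timelike if $W'(t)W(t)^{-1}\in\mathrm{sp}^+(2n)$ for all $t$; a curve in $\widetilde{\mathrm{Sp}}(2n)$ is timelike if its projection is. *)

From HB Require Import structures.
From mathcomp Require Import all_boot all_order all_algebra.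
From mathcomp Require Import all_classical all_reals all_analysis.
Set Implicit Arguments. Unset Strict Implicit. Unset Printing Implicit Defensive.
Import Order.TTheory GRing.Theory Num.Theory.
Import numFieldNormedType.Exports.
Local Open Scope classical_set_scope.
Local Open Scope ring_scope.

Section Symplectic.
Variables (R : realType) (n : nat).

(* coordinates (x_1..x_n, y_1..y_n); omega0 = sum_j dx_j /\ dy_j *)
Definition J0 : 'M[R]_(n + n) := block_mx 0 1%:M (- 1%:M) 0.

Definition omega0 (u v : 'cV[R]_(n + n)) : R := (u^T *m J0 *m v) 0 0.

Definition symplectic (A : 'M[R]_(n + n)) : Prop :=
  forall u v, omega0 (A *m u) (A *m v) = omega0 u v.

Definition sp_alg (X : 'M[R]_(n + n)) : Prop :=
  forall u v, omega0 u (X *m v) = omega0 v (X *m u).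

Definition sp_plus (X : 'M[R]_(n + n)) : Prop :=
  sp_alg X /\ forall u, u != 0 -> 0 < omega0 u (X *m u).

Definition timelike_Sp (W : R -> 'M[R]_(n + n)) (a b : R) : Prop :=
  a < b /\
  (forall t, a < t < b -> symplectic (W t)) /\
  (forall t, a < t < b -> derivable W t 1) /\
  {in `]a, b[, continuous (derive1 W)} /\
  (forall t, a < t < b -> sp_plus (derive1 W t *m invmx (W t))).

End Symplectic.

Section Topo.
Variable R : realType.

Definition I01 : set R := `[0, 1]%classic.

Definition path_in {X : topologicalType} (f : R -> X) : Prop :=
  {within I01, continuous f}.

Definition path_connected (X : topologicalType) : Prop :=
  forall x y : X, exists f : R -> X, path_in f /\ f 0 = x /\ f 1 = y.

Definition simply_connected (X : topologicalType) : Prop :=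
  path_connected X /\
  forall f : R -> X, path_in f -> f 0 = f 1 ->
    exists H : R * R -> X,
      {within I01 `*` I01, continuous H} /\
      (forall s, s \in I01 -> H (s, 0) = f s) /\
      (forall s, s \in I01 -> H (s, 1) = f 0) /\
      (forall t, t \in I01 -> H (0, t) = f 0 /\ H (1, t) = f 0).

Definition covering_onto {X Y : topologicalType} (p : X -> Y) (S : set Y) :
  Prop :=
  continuous p /\ p @` setT = S /\
  forall y, S y -> exists U : set Y, open U /\ U y /\
    exists (I : Type) (V : I -> set X),
      (forall i, open (V i)) /\
      p @^-1` U = \bigcup_i V i /\
      (forall i j, i <> j -> V i `&` V j = set0) /\
      (forall i, set_inj (V i) p) /\
      (forall i, p @` V i = U `&` S) /\
      (forall i W, open W -> W `<=` V i ->
         exists O : set Y, open O /\ p @` W = O `&` S).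

Definition topological_group (G : topologicalType) (mul : G -> G -> G)
  (inv : G -> G) (e : G) : Prop :=
  (forall x y z, mul x (mul y z) = mul (mul x y) z) /\
  (forall x, mul e x = x) /\ (forall x, mul x e = x) /\
  (forall x, mul (inv x) x = e) /\ (forall x, mul x (inv x) = e) /\
  continuous (fun q : G * G => mul q.1 q.2) /\ continuous inv.

End Topo.

Definition universal_cover_Sp (R : realType) (n : nat) (G : topologicalType)
  (mul : G -> G -> G) (inv : G -> G) (e : G) (p : G -> 'M[R]_(n + n)) : Prop :=
  topological_group mul inv e /\
  simply_connected R G /\
  covering_onto p (fun A => symplectic A) /\
  (forall g h, p (mul g h) = p g *m p h).

Definition timelike_cover (R : realType) (n : nat) (G : topologicalType)
  (p : G -> 'M[R]_(n + n)) (c : R -> G) (a b : R) : Prop :=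
  {in `]a, b[, continuous c} /\ timelike_Sp (p \o c) a b.

From HB Require Import structures.
From mathcomp Require Import all_boot all_order all_algebra.
From mathcomp Require Import all_classical all_reals all_analysis.
From mathcomp Require Import ring lra.
Import Order.TTheory GRing.Theory Num.Theory.
Import numFieldNormedType.Exports.
Set Implicit Arguments. Unset Strict Implicit. Unset Printing Implicit Defensive.
Local Open Scope classical_set_scope.
Local Open Scope ring_scope.

(* A conjugation-invariant function is constant on conjugacy classes, so it is
   enough to find a timelike curve inside a single conjugacy class of the
   universal cover.  Conjugating the squeeze A = diag(2, 1/2) by the shears
   g(t) = [[1 + t^2, t], [t, 1]] (all blocks scalar) gives a curve
   W(t) = g(t) A g(t)^-1 in Sp(2n) with J0 W' W^-1 = [[p, b], [b, s]],
   p > 0 and p s - b^2 = 9/4 (1 - t^2), so W is timelike on ]-1, 1[.  Lifting g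
   near t = 0 through the covering and conjugating a fixed preimage of A by the
   lift gives a timelike curve in the cover along which F would have to be
   both constant and strictly increasing. *)

Lemma is_deriveZl (R : realType) (W : normedModType R) (f : R -> R) (w : W)
    (x df : R) :
  is_derive x 1 f df -> is_derive x 1 (fun t => f t *: w) (df *: w).
Proof.
move=> [/derivable1_diffP fx <-].
have fwx := differentiableZl w fx.
apply: DeriveDef; first exact/derivable1_diffP.
by rewrite !deriveE // diffZl.
Qed.

Lemma mulmx1_eq (R : comUnitRingType) (m : nat) (A B : 'M[R]_m) :
  A *m B = 1%:M -> invmx A = B.
Proof.
move=> AB; have [uA _] := mulmx1_unit AB.
by rewrite -[invmx A]mulmx1 -AB mulmxA mulVmx // mul1mx.
Qed.

Lemma bilinear_form_inj (R : comNzRingType) (m : nat) (M N : 'M[R]_m) :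
  (forall u v : 'cV[R]_m, (u^T *m M *m v) 0 0 = (u^T *m N *m v) 0 0) ->
  M = N.
Proof.
move=> MN; apply/matrixP => i j.
by have := MN (delta_mx i 0) (delta_mx j 0); rewrite trmx_delta -!rowE -!colE !mxE.
Qed.

Section PositiveDefinite2.
Variables (R : realFieldType) (a b c : R).
Hypotheses (a_gt0 : 0 < a) (disc_gt0 : 0 < a * c - b ^+ 2).

Let mul_form2E x y : a * (a * x ^+ 2 + 2 * b * (x * y) + c * y ^+ 2) =
  (a * x + b * y) ^+ 2 + (a * c - b ^+ 2) * y ^+ 2.
Proof. by ring. Qed.

Lemma posdef2_ge0 x y : 0 <= a * x ^+ 2 + 2 * b * (x * y) + c * y ^+ 2.
Proof.
rewrite -(pmulr_rge0 _ a_gt0) mul_form2E.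
by rewrite addr_ge0 ?sqr_ge0 // mulr_ge0 ?sqr_ge0 // ltW.
Qed.

Lemma posdef2_eq0 x y :
  a * x ^+ 2 + 2 * b * (x * y) + c * y ^+ 2 = 0 -> x = 0 /\ y = 0.
Proof.
move=> /(congr1 ( *%R a)); rewrite mulr0 mul_form2E => sum0.
have sq1 := sqr_ge0 (a * x + b * y).
have sq2 := mulr_ge0 (ltW disc_gt0) (sqr_ge0 y).
have /eqP : (a * c - b ^+ 2) * y ^+ 2 = 0 by lra.
rewrite mulf_eq0 gt_eqF //= sqrf_eq0 => /eqP y0; split=> //.
have /eqP : (a * x + b * y) ^+ 2 = 0 by lra.
by rewrite y0 mulr0 addr0 sqrf_eq0 mulf_eq0 gt_eqF //= => /eqP.
Qed.

End PositiveDefinite2.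

Section ScalarBlocks.
Context {R : realType} {n : nat}.
Local Notation J0 := (J0 R n).

Definition sblock (a b c d : R) : 'M[R]_(n + n) := block_mx a%:M b%:M c%:M d%:M.

Lemma mul_sblock a b c d a' b' c' d' :
  sblock a b c d *m sblock a' b' c' d' =
  sblock (a * a' + b * c') (a * b' + b * d') (c * a' + d * c') (c * b' + d * d').
Proof. by rewrite /sblock mulmx_block -!scalar_mxM -!raddfD. Qed.

Lemma add_sblock a b c d a' b' c' d' :
  sblock a b c d + sblock a' b' c' d' = sblock (a + a') (b + b') (c + c') (d + d').
Proof. by rewrite /sblock add_block_mx -!raddfD. Qed.

Lemma scale_sblock k a b c d :
  k *: sblock a b c d = sblock (k * a) (k * b) (k * c) (k * d).
Proof. by rewrite /sblock scale_block_mx !scale_scalar_mx. Qed.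

Lemma tr_sblock a b c d : (sblock a b c d)^T = sblock a c b d.
Proof. by rewrite /sblock tr_block_mx !tr_scalar_mx. Qed.

Lemma sblock1 : sblock 1 0 0 1 = 1%:M.
Proof. by rewrite /sblock raddf0 -scalar_mx_block. Qed.

Lemma J0_sblock : J0 = sblock 0 1 (-1) 0.
Proof. by rewrite /J0 /sblock raddf0 raddfN. Qed.

Lemma sblockE a b c d : sblock a b c d =
  a *: sblock 1 0 0 0 + b *: sblock 0 1 0 0 + c *: sblock 0 0 1 0 + d *: sblock 0 0 0 1.
Proof. by rewrite !scale_sblock !add_sblock; congr sblock; ring. Qed.

Lemma invmx_sblock a b c d : a * d - b * c = 1 ->
  invmx (sblock a b c d) = sblock d (- b) (- c) a.
Proof.
move=> det1; apply: mulmx1_eq; rewrite mul_sblock -sblock1.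
by congr sblock; rewrite -?[X in _ = X]det1; ring.
Qed.

Lemma symplecticE (A : 'M[R]_(n + n)) : symplectic A <-> A^T *m J0 *m A = J0.
Proof.
split=> [sA | AJA u v].
  apply: bilinear_form_inj => u v; have := sA u v.
  by rewrite /omega0 trmx_mul !mulmxA.
by rewrite /omega0 trmx_mul -!mulmxA (mulmxA A^T) (mulmxA _ A) AJA.
Qed.

Lemma symplectic_unitmx (A : 'M[R]_(n + n)) : symplectic A -> A \in unitmx.
Proof.
move=> /symplecticE AJA.
have J0J0 : J0 *m J0 = - 1%:M.
  rewrite J0_sblock mul_sblock -sblock1 -[- sblock _ _ _ _]scaleN1r scale_sblock.
  by congr sblock; ring.
suff /mulmx1_unit[] : (- (J0 *m A^T *m J0)) *m A = 1%:M by [].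
by rewrite mulNmx -!mulmxA (mulmxA A^T) AJA J0J0 opprK.
Qed.

Lemma symplectic_sblock a b c d : a * d - b * c = 1 -> symplectic (sblock a b c d).
Proof.
move=> det1; apply/symplecticE.
rewrite J0_sblock tr_sblock !mul_sblock; congr sblock;
  by rewrite -?[X in _ = X]det1 -?[X in _ = - X]det1; ring.
Qed.

Lemma form_sblock (u : 'cV[R]_(n + n)) a b c d :
  (u^T *m sblock a b c d *m u) 0 0 =
  \sum_i (a * usubmx u i 0 ^+ 2 + (b + c) * (usubmx u i 0 * dsubmx u i 0)
          + d * dsubmx u i 0 ^+ 2).
Proof.
set x := usubmx u; set y := dsubmx u.
rewrite -[u]vsubmxK -/x -/y tr_col_mx /sblock mul_row_block mul_row_col !mulmxDl.
rewrite !mul_mx_scalar -!scalemxAl; rewrite !mxE !mulr_sumr -!big_split /=.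
by apply: eq_bigr => i _; rewrite !mxE; ring.
Qed.

Lemma sp_plus_sblock (X : 'M[R]_(n + n)) a b c :
  J0 *m X = sblock a b b c -> 0 < a -> 0 < a * c - b ^+ 2 -> sp_plus X.
Proof.
move=> JX a_gt0 disc_gt0.
have omegaE u v : omega0 u (X *m v) = (u^T *m sblock a b b c *m v) 0 0.
  by rewrite /omega0 -JX !mulmxA.
split=> [u v | u u_neq0].
  have trE (M : 'M[R]_1) : M 0 0 = M^T 0 0 by rewrite mxE.
  by rewrite !omegaE [LHS]trE !trmx_mul tr_sblock trmxK mulmxA.
have form_ge0 i (_ : true) := posdef2_ge0 a_gt0 disc_gt0
  (usubmx u i 0) (dsubmx u i 0).
rewrite omegaE form_sblock -mulr2n -mulr_natl lt_def sumr_ge0 ?andbT //.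
apply: contra u_neq0 => /eqP /(psumr_eq0P form_ge0) sum0.
have {}sum0 i := posdef2_eq0 a_gt0 disc_gt0 (sum0 i isT).
rewrite -[u]vsubmxK -col_mx0; apply/eqP; congr col_mx; apply/matrixP => i j;
  by rewrite (ord1 j) [RHS]mxE; case: (sum0 i).
Qed.

End ScalarBlocks.

Section PolynomialBlockCurves.
Context {R : realType} {n : nat}.

Definition sblock_poly (pa pb pc pd : {poly R}) (t : R) : 'M[R]_(n + n) :=
  sblock pa.[t] pb.[t] pc.[t] pd.[t].

Lemma is_derive_sblock_poly (pa pb pc pd : {poly R}) (t : R) :
  is_derive t 1 (sblock_poly pa pb pc pd) (sblock_poly pa^`() pb^`() pc^`() pd^`() t).
Proof.
have -> : sblock_poly pa pb pc pd =
    (fun t => pa.[t] *: sblock 1 0 0 0) + (fun t => pb.[t] *: sblock 0 1 0 0)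
  + (fun t => pc.[t] *: sblock 0 0 1 0) + (fun t => pd.[t] *: sblock 0 0 0 1).
  by apply/funext => s; rewrite /sblock_poly sblockE.
have dZ (p : {poly R}) (E : 'M[R]_(n + n)) :
  is_derive t 1 (fun t => p.[t] *: E) (p^`().[t] *: E).
  exact: is_deriveZl (is_derive_poly p t).
rewrite /sblock_poly (sblockE pa^`().[t]).
exact: is_deriveD (is_deriveD (is_deriveD (dZ _ _) (dZ _ _)) (dZ _ _)) (dZ _ _).
Qed.

Lemma derive1_sblock_poly (pa pb pc pd : {poly R}) (t : R) :
  derive1 (sblock_poly pa pb pc pd) t = sblock_poly pa^`() pb^`() pc^`() pd^`() t.
Proof. by rewrite derive1E; have [] := is_derive_sblock_poly pa pb pc pd t. Qed.

Lemma derivable_sblock_poly (pa pb pc pd : {poly R}) (t : R) :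
  derivable (sblock_poly pa pb pc pd) t 1.
Proof. by have [] := is_derive_sblock_poly pa pb pc pd t. Qed.

Lemma continuous_sblock_poly (pa pb pc pd : {poly R}) :
  continuous (sblock_poly pa pb pc pd).
Proof.
by move=> t; apply/differentiable_continuous/derivable1_diffP/derivable_sblock_poly.
Qed.

End PolynomialBlockCurves.

Lemma timelike_Sp_eq_in (R : realType) (n : nat) (W V : R -> 'M[R]_(n + n))
    (a b : R) :
  {in `]a, b[, W =1 V} -> timelike_Sp W a b -> timelike_Sp V a b.
Proof.
move=> WV [ab [sW [dW [cW pW]]]].
have near_WV t : a < t < b -> \forall s \near t, W s = V s.
  move=> abt; have : \forall s \near t, s \in `]a, b[.
    by apply: near_in_itvoo; rewrite in_itv /=.
  by apply: filterS => s /WV.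
have dWV t : a < t < b -> derive1 W t = derive1 V t.
  by move=> abt; rewrite !derive1E; apply: near_eq_derive (near_WV t abt).
have WVt t : a < t < b -> W t = V t by move=> abt; apply: WV; rewrite in_itv.
split; first exact: ab.
split=> [t abt|]; first by rewrite -WVt //; exact: sW.
split=> [t abt|].
  exact: (@near_eq_derivable _ _ _ W V t 1 (near_WV t abt) (dW t abt)).
split=> [t abt|t abt]; last by rewrite -dWV // -WVt //; exact: pW.
have a_t_b : a < t < b by move: abt; rewrite in_itv.
rewrite /continuous_at -dWV //; apply: cvg_trans (cW t abt).
apply: near_eq_cvg; have : \forall s \near t, s \in `]a, b[ by exact: near_in_itvoo.
by apply: filterS => s; rewrite in_itv => /dWV.
Qed.

Section SqueezeOrbit.
Context {R : realType} {n : nat}.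

Let hornerS := (hornerD, hornerN, hornerCM, hornerXn, hornerX, hornerC).

Definition squeeze : 'M[R]_(n + n) := sblock 2 0 0 (1 / 2).

Definition shear : R -> 'M[R]_(n + n) := sblock_poly (1 + 'X^2) 'X 'X 1.

Definition squeeze_orbit : R -> 'M[R]_(n + n) :=
  sblock_poly (2%:P + (3 / 2)%:P * 'X^2) (- ((3 / 2)%:P * ('X + 'X^3)))
              ((3 / 2)%:P * 'X) ((1 / 2)%:P - (3 / 2)%:P * 'X^2).

Lemma symplectic_squeeze : symplectic squeeze.
Proof. by apply: symplectic_sblock; field. Qed.

Lemma symplectic_shear t : symplectic (shear t).
Proof. by apply: symplectic_sblock; rewrite !hornerS; ring. Qed.

Lemma continuous_shear : continuous shear.
Proof. exact: continuous_sblock_poly. Qed.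

Lemma squeeze_orbitE t : shear t *m squeeze *m invmx (shear t) = squeeze_orbit t.
Proof.
rewrite /shear /sblock_poly invmx_sblock !hornerS; last by ring.
by rewrite /squeeze !mul_sblock; congr sblock; rewrite !hornerS; field.
Qed.

Lemma timelike_squeeze_orbit a b : -1 <= a -> a < b -> b <= 1 ->
  timelike_Sp squeeze_orbit a b.
Proof.
move=> a_ge ab b_le.
have det1 (t : R) : (2 + 3 / 2 * t ^+ 2) * (1 / 2 - 3 / 2 * t ^+ 2)
              - (- (3 / 2 * (t + t ^+ 3))) * (3 / 2 * t) = 1 by field.
have dorbit : derive1 squeeze_orbit = sblock_poly _ _ _ _ :=
  funext (derive1_sblock_poly _ _ _ _).
split; first exact: ab.
split=> [t _|]; first by apply: symplectic_sblock; rewrite !hornerS.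
split=> [t _|]; first exact: derivable_sblock_poly.
split=> [t _|t abt]; first by rewrite dorbit; exact: continuous_sblock_poly.
have t2_lt1 : t ^+ 2 < 1 by nra.
rewrite dorbit /squeeze_orbit /sblock_poly invmx_sblock !hornerS ?det1 //.
apply: (@sp_plus_sblock R n _ (3/4 + 9/4 * t ^+ 2) (- (15/4 * t + 9/4 * t ^+ 3))
          (3 + 27/4 * t ^+ 2 + 9/4 * t ^+ 4)).
- rewrite J0_sblock !mul_sblock !poly.derivE.
  rewrite !(hornerD, hornerN, hornerCM, hornerM, hornerXn, hornerX, hornerC).
  by congr sblock; field.
- by have := sqr_ge0 t; lra.
- have -> : (3 / 4 + 9 / 4 * t ^+ 2) * (3 + 27 / 4 * t ^+ 2 + 9 / 4 * t ^+ 4) -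
    (- (15 / 4 * t + 9 / 4 * t ^+ 3)) ^+ 2 = 9/4 * (1 - t ^+ 2) by field.
  lra.
Qed.

End SqueezeOrbit.

Section CoveringLift.
Variables (T X Y : topologicalType) (p : X -> Y) (S : set Y).
Hypothesis p_cover : covering_onto p S.

Lemma covering_lift_near (g : T -> Y) (t0 : T) :
  continuous g -> (forall t, S (g t)) ->
  exists lift : T -> X, \forall t \near t0, p (lift t) = g t /\ {for t, continuous lift}.
Proof.
move=> g_cont gS; case: p_cover => _ [p_onto p_local].
have [U [U_open [Ug0 [I [V [V_open [preU [_ [V_inj [pV pV_open]]]]]]]]]] :=
  p_local _ (gS t0).
have [x0 _ px0] : (p @` setT) (g t0) by rewrite p_onto; exact: gS.
have [i _ Vx0] : (\bigcup_i V i) x0 by rewrite -preU /= px0.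
pose lift t := xget x0 [set x | V i x /\ p x = g t].
have liftP t : U (g t) -> V i (lift t) /\ p (lift t) = g t.
  move=> Ugt; apply: (xgetPex x0 (P := [set x | V i x /\ p x = g t])).
  have : (p @` V i) (g t) by rewrite pV.
  by case=> x Vx pxg; exists x.
have g_near (B : set Y) t : open B -> B (g t) -> \forall s \near t, B (g s).
  by move=> B_open Bgt; apply: g_cont; apply: open_nbhs_nbhs.
exists lift; apply: filterS (g_near U t0 U_open Ug0) => t Ugt.
split; first exact: (liftP t Ugt).2.
move=> N; rewrite nbhsE; case=> A [A_open A_lift] AN.
have [B [B_open pA]] :=
  pV_open i (A `&` V i) (openI A_open (V_open i)) (@subIsetr _ _ _).
have Bgt : B (g t).
  have : (p @` (A `&` V i)) (g t) by exists (lift t); have [] := liftP t Ugt.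
  by rewrite pA => -[].
apply: filterS (g_near B t B_open Bgt) => s Bgs.
have [w [Aw Viw] pw] : (p @` (A `&` V i)) (g s) by rewrite pA.
have [Ugs _] : (U `&` S) (g s) by rewrite -(pV i) -pw; exists w.
have [Vi_lift p_lift] := liftP s Ugs.
suff ws : w = lift s by apply: AN; rewrite /= -ws.
by apply: (V_inj i); rewrite ?inE // pw p_lift.
Qed.

End CoveringLift.

Lemma continuous_conj_at (G : topologicalType) (mul : G -> G -> G) (inv : G -> G)
    (e : G) (T : topologicalType) (c : T -> G) (a : G) (t : T) :
  topological_group mul inv e -> {for t, continuous c} ->
  {for t, continuous (fun s => mul (mul (c s) a) (inv (c s)))}.
Proof.
move=> [_ [_ [_ [_ [_ [mul_cont inv_cont]]]]]] c_cont.
have cvg_mul (f g : T -> G) : f @ t --> f t -> g @ t --> g t ->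
    (fun s => mul (f s) (g s)) @ t --> mul (f t) (g t).
  by move=> ft gt; exact: (continuous_cvg _ (mul_cont (f t, g t)) (cvg_pair ft gt)).
apply: (cvg_mul); first exact: cvg_mul c_cont (cvg_cst a).
exact: (continuous_cvg _ (inv_cont (c t)) c_cont).
Qed.

Section SymplecticCover.
Variables (R : realType) (n : nat) (G : topologicalType).
Variables (mul : G -> G -> G) (inv : G -> G) (e : G) (p : G -> 'M[R]_(n + n)).
Hypothesis p_cover : universal_cover_Sp mul inv e p.

Lemma cover_symplectic x : symplectic (p x).
Proof.
have [_ [_ [[_ [p_onto _]] _]]] := p_cover.
suff : range p (p x) by rewrite p_onto.
by exists x.
Qed.

Lemma cover_conj g a : p (mul (mul g a) (inv g)) = p g *m p a *m invmx (p g).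
Proof.
have [[_ [mul1g [_ [_ [mulgV _]]]]] [_ [_ p_mul]]] := p_cover.
have pe_unit := symplectic_unitmx (cover_symplectic e).
have pe1 : p e = 1%:M.
  by rewrite -(mulVmx pe_unit) -[in LHS](mulKmx pe_unit (p e)) -p_mul mul1g.
by rewrite !p_mul; congr (_ *m _); symmetry; apply: mulmx1_eq; rewrite -p_mul mulgV.
Qed.

Lemma conjugacy_class_timelike : exists (a : G) (c : R -> G) (d : R),
  0 < d /\ timelike_cover p c (- d) d /\ forall t, exists g, c t = mul (mul g a) (inv g).
Proof.
have [top_grp [_ [p_covering _]]] := p_cover.
have [_ [p_onto _]] := p_covering.
have [lift lift_near] := @covering_lift_near _ _ _ _ _ p_covering _ 0
  continuous_shear symplectic_shear.
have [δ δ_gt0 δP] : exists2 δ : R, 0 < δ &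
    forall t, `|t| < δ -> p (lift t) = shear t /\ {for t, continuous lift}.
  have /nbhs_ballP[δ δ_gt0 δP] := lift_near.
  by exists δ => // t tδ; apply: δP; rewrite -ball_normE /ball_ /= sub0r normrN.
have [a _ p_a] : range p squeeze by rewrite p_onto; exact: symplectic_squeeze.
pose d := Num.min δ 1.
have d_gt0 : 0 < d by rewrite lt_min δ_gt0 ltr01.
have lift_d t : -d < t < d -> p (lift t) = shear t /\ {for t, continuous lift}.
  have d_le : d <= δ by rewrite ge_min lexx.
  by move=> /andP[dt td]; apply: δP; rewrite ltr_norml; apply/andP; split; lra.
have d_le1 : d <= 1 by rewrite ge_min lexx orbT.
pose c t := mul (mul (lift t) a) (inv (lift t)).
have p_c t : -d < t < d -> p (c t) = squeeze_orbit t.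
  by move=> /lift_d[p_lift _]; rewrite cover_conj p_lift p_a squeeze_orbitE.
exists a, c, d; split=> //; split; last by move=> t; exists (lift t).
split.
  move=> t; rewrite in_itv /= => /lift_d[_ lift_cont].
  exact: continuous_conj_at top_grp lift_cont.
apply: timelike_Sp_eq_in (timelike_squeeze_orbit _ _ _); last by lra.
- by move=> t; rewrite in_itv /= => /p_c.
- by lra.
- by lra.
Qed.

End SymplecticCover.

Theorem proposition9p3 (R : realType) (n : nat) (G : topologicalType)
  (mul : G -> G -> G) (inv : G -> G) (e : G) (p : G -> 'M[R]_(n + n)) :
  universal_cover_Sp mul inv e p ->
  ~ (exists F : G -> R,
       continuous F /\
       (forall (c : R -> G) (a b : R), timelike_cover p c a b ->
          forall s t, a < s -> s < t -> t < b -> F (c s) < F (c t)) /\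
       (forall g h : G, F (mul (mul g h) (inv g)) = F h)).
Proof.
move=> p_cover [F [_ [F_timelike_incr F_conj]]].
have [a [c [d [d_gt0 [c_timelike c_conj]]]]] := conjugacy_class_timelike p_cover.
have F_c t : F (c t) = F a by have [g ->] := c_conj t; rewrite F_conj.
suff : F (c 0) < F (c (d / 2)) by rewrite !F_c ltxx.
by apply: (F_timelike_incr c (- d) d c_timelike); lra.
Qed.
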